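(* Let $m\ge1$, let $\mathcal{I}\subseteq\mathcal{M}_m$ be a decreasing monomial set with $r=\max_{f\in\mathcal{I}}\deg(f)$, and let $f,g\in\mathcal{I}_r$ with $h=\gcd(f,g)$ such that $\deg(h)=r-2$. Then \[ \Big|{\rm LTA}(m,2)_h\cdot h\cdot\Big({\rm LTA}(m,2)_{f} \cdot \tfrac{f}{h}+{\rm LTA}(m,2)_{g}\cdot \tfrac{g}{h}\Big)\Big|= |{\rm LTA}(m,2)_h\cdot h|\cdot \Big|{\rm LTA}(m,2)_{f} \cdot \tfrac{f}{h}+{\rm LTA}(m,2)_{g}\cdot \tfrac{g}{h}\Big|. \]
   Context: $\mathbf{R}_m=\mathbb{F}_2[x_0,\dots,x_{m-1}]/(x_0^2-x_0,\dots,x_{m-1}^2-x_{m-1})$. $\mathcal{M}_m$ is the set of monomials $x_0^{i_0}\cdots x_{m-1}^{i_{m-1}}$, $i_j\in\{0,1\}$. For a monomial $f$, $\operatorname{ind}(f)$ is the set of indices of variables dividing $f$, $\deg f=|\operatorname{ind}(f)|$; $\gcd(f,g)$ has $\operatorname{ind}=\operatorname{ind}(f)\cap\operatorname{ind}(g)$; for $h\mid f$, $f/h$ has $\operatorname{ind}=\operatorname{ind}(f)\setminus\operatorname{ind}(h)$. Order: $f\preceq_w g$ iff $\operatorname{ind}(f)\subseteq\operatorname{ind}(g)$; for equal-degree $f=x_{i_1}\cdots x_{i_s}$, $g=x_{j_1}\cdots x_{j_s}$ (increasing indices), $f\preceq_{sh}g$ iff $i_\ell\le j_\ell$ for all $\ell$;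 $f\preceq g$ iff $f\preceq_{sh}g^*\preceq_w g$ for some $g^*$. $\mathcal{I}$ is decreasing if $f\in\mathcal{I}$, $g\preceq f$ imply $g\in\mathcal{I}$; $\mathcal{I}_r=\{f\in\mathcal{I}:\deg f=r\}$. ${\rm LTA}(m,2)$ is the set of pairs $(\mathbf{B},\varepsilon)$ with $\mathbf{B}=(b_{i,j})\in\mathbb{F}_2^{m\times m}$ lower triangular with ones on the diagonal and $\varepsilon\in\mathbb{F}_2^m$; for a monomial $u$, $(\mathbf{B},\varepsilon)\cdot u\in\mathbf{R}_m$ replaces each variable $x_i$ of $u$ by $x_i+\sum_{j<i}b_{i,j}x_j+\varepsilon_i$. For a monomial $g$, ${\rm LTA}(m,2)_g$ is the set of $(\mathbf{B},\varepsilon)\in{\rm LTA}(m,2)$ with $\varepsilon_i=0$ for $i\notin\operatorname{ind}(g)$ and $b_{i,j}=0$ (for $j<i$) whenever $i\notin\operatorname{ind}(g)$ or $j\in\operatorname{ind}(g)$. For $G\subseteq{\rm LTA}(m,2)$ and monomial $u$, $G\cdot u=\{(\mathbf{B},\varepsilon)\cdot u:(\mathbf{B},\varepsilon)\in G\}$. For sets $\mathcal{S},\mathcal{T}\subseteq\mathbf{R}_m$: $\mathcal{S}+\mathcal{T}=\{s+t\}$, $\mathcal{S}\cdot\mathcal{T}=\{st\}$; $G\cdot h\cdot(\mathcal{S})$ is the product of the set $G\cdot h$ with the set $\mathcal{S}$. *)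

From mathcomp Require Import all_boot all_algebra.
Set Implicit Arguments. Unset Strict Implicit. Unset Printing Implicit Defensive.

(* ---------- The ring R_m = F_2[x_0..x_{m-1}]/(x_i^2 - x_i) ----------
   A monomial x_{i_1}...x_{i_s} is identified with its index set ind(f) : {set 'I_m}.
   An element of R_m is written in the canonical (multilinear) basis of monomials,
   i.e. as the set of monomials carrying coefficient 1 in F_2. *)

Definition mono (m : nat) := {set 'I_m}.
Definition Rm (m : nat) := {set {set 'I_m}}.

Section Ring.
Variable m : nat.
Implicit Types p q : Rm m.

Definition radd p q : Rm m := (p :\: q) :|: (q :\: p).
Definition rzero : Rm m := set0.
Definition rone : Rm m := [set set0].
Definition rvar (i : 'I_m) : Rm m := [set [set i]].
(* multiplication: x_A * x_B = x_{A u B} (since x_i^2 = x_i), extended bilinearly *)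
Definition rmul p q : Rm m :=
  \big[radd/rzero]_(a in p) \big[radd/rzero]_(b in q) [set a :|: b].

Definition rmono (u : mono m) : Rm m := [set u].

Definition mdeg (f : mono m) : nat := #|f|.
Definition mgcd (f g : mono m) : mono m := f :&: g.
Definition mdiv (f h : mono m) : mono m := f :\: h.

Definition idxs (f : mono m) : seq nat := sort leq [seq val i | i <- enum f].
Definition le_w (f g : mono m) : bool := f \subset g.
Definition le_sh (f g : mono m) : bool :=
  (#|f| == #|g|) &&
  all (fun l => nth 0%N (idxs f) l <= nth 0%N (idxs g) l) (iota 0 #|f|).
Definition mle (f g : mono m) : bool := [exists gs : mono m, le_sh f gs && le_w gs g].

Definition decreasing (I : {set mono m}) : Prop :=
  forall f g : mono m, f \in I -> mle g f -> g \in I.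

Definition lta := ('M[bool]_m * {ffun 'I_m -> bool})%type.

Definition is_lta (a : lta) : bool :=
  [forall i : 'I_m, (a.1 i i == true) &&
     [forall j : 'I_m, (i < j)%N ==> (a.1 i j == false)]].

Definition LTA : {set lta} := [set a | is_lta a].

Definition LTA_g (g : mono m) : {set lta} :=
  [set a in LTA |
    [forall i : 'I_m, (i \notin g) ==> (a.2 i == false)] &&
    [forall i : 'I_m, forall j : 'I_m,
       ((j < i)%N && ((i \notin g) || (j \in g))) ==> (a.1 i j == false)]].

Definition act_var (a : lta) (i : 'I_m) : Rm m :=
  radd (radd (rvar i)
             (\big[radd/rzero]_(j : 'I_m | (j < i)%N && a.1 i j) rvar j))
       (if a.2 i then rone else rzero).

Definition act (a : lta) (u : mono m) : Rm m :=
  \big[rmul/rone]_(i in u) act_var a i.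

Definition actS (G : {set lta}) (u : mono m) : {set Rm m} := [set act a u | a in G].
Definition addS (S T : {set Rm m}) : {set Rm m} := [set radd s t | s in S, t in T].
Definition mulS (S T : {set Rm m}) : {set Rm m} := [set rmul s t | s in S, t in T].

End Ring.

From mathcomp Require Import all_boot all_algebra.
Set Implicit Arguments. Unset Strict Implicit. Unset Printing Implicit Defensive.

(* A reduced polynomial of R_m is determined by its values on F_2^m (encoded
   as subsets of 'I_m).  Write P_a = (B, eps) . h for (B, eps) in LTA(m,2)_h: it
   is the product of the x_i + phi_i over i in h, where each phi_i is affine in
   the coordinates outside h, so above each assignment of those coordinates P_a
   takes the value 1 at exactly one point.  The second factor Q only depends on
   the coordinates outside h.  Hence P_1 Q_1 = P_2 Q_2 forces Q_1 = Q_2 and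
   phi^1_i = phi^2_i on the support of Q_1.  Since f/h and g/h are disjoint of
   degree 2, Q_1 = L_a L_b + L_c L_d for unitriangular affine forms L, and its
   support contains an edge in every coordinate direction; two affine functions
   agreeing on such a set are equal, so P_1 = P_2. *)

Section Evaluation.
Variable m : nat.
Implicit Types (p q : Rm m) (x : {set 'I_m}).

Definition ev p x : bool := \big[addb/false]_(u in p) (u \subset x).

Lemma ev_radd p q x : ev (radd p q) x = ev p x (+) ev q x.
Proof.
rewrite /ev [in RHS]big_mkcond [X in _ (+) X]big_mkcond -big_split big_mkcond.
apply: eq_bigr => u _ /=.
by rewrite /radd !inE; case: (u \in p); case: (u \in q); case: (u \subset x).
Qed.

Lemma ev_rzero x : ev (rzero m) x = false.
Proof. by rewrite /ev big_set0. Qed.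

Lemma ev_rone x : ev (rone m) x = true.
Proof. by rewrite /ev big_set1 sub0set. Qed.

Lemma ev_rvar (i : 'I_m) x : ev (rvar i) x = (i \in x).
Proof. by rewrite /ev big_set1 sub1set. Qed.

Lemma ev_rmul p q x : ev (rmul p q) x = ev p x && ev q x.
Proof.
have evD : {morph (fun p => ev p x) : p q / radd p q >-> p (+) q}.
  by move=> ? ?; apply: ev_radd.
rewrite /rmul (big_morph _ evD (ev_rzero x)).
under eq_bigr => u _.
  rewrite (big_morph _ evD (ev_rzero x)).
  under eq_bigr => v _ do rewrite /ev big_set1 subUset.
  rewrite -(big_endo (andb (u \subset x)) (andb_addr _) (andbF _)).
  over.
by rewrite -(big_endo (andb^~ (ev q x)) (fun u v => andb_addl u v _) (andFb _)).
Qed.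

Lemma ev_inj p q : ev p =1 ev q -> p = q.
Proof.
move=> E; suff pq0 : radd p q = set0.
  apply/setP => u; move/setP: pq0 => /(_ u); rewrite /radd !inE.
  by case: (u \in p); case: (u \in q).
apply/eqP; apply: contraT => /set0Pn[u0 pq_u0].
case: (arg_minnP (fun v : {set 'I_m} => #|v|) pq_u0) => u pq_u u_min.
have := ev_radd p q u; rewrite E addbb /ev (bigD1 u) //= subxx big1 //.
move=> v /andP[pq_v vu].
by apply/negbTE; apply: contra vu => vsub; rewrite eqEcard vsub u_min.
Qed.

End Evaluation.

Lemma xor_and_edge (da db dc dd : bool) : exists ta tb tc td : bool,
  ((ta && tb) (+) (tc && td)) &&
  (((ta (+) da) && (tb (+) db)) (+) ((tc (+) dc) && (td (+) dd))).
Proof.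
case: da; case: db; case: dc; case: dd;
  solve [ (exists true + exists false); (exists true + exists false);
          (exists true + exists false); (exists true + exists false); by [] ].
Qed.

Section AffineForms.
Variable m : nat.
Implicit Types (x : {set 'I_m}) (J : pred 'I_m) (i k : 'I_m).

Definition affine_form J (c : bool) x : bool :=
  \big[addb/false]_(j | J j) (j \in x) (+) c.

Definition toggle x k : {set 'I_m} := [set j | (j \in x) (+) (j == k)].

Lemma affine_form_toggle J c x k :
  affine_form J c (toggle x k) = affine_form J c x (+) J k.
Proof.
rewrite /affine_form; under eq_bigr do rewrite inE.
rewrite big_split /=; have -> : \big[addb/false]_(j | J j) (j == k) = J k.
  rewrite big_mkcond (bigD1 k) //= eqxx big1 ?addbF => [|j /negbTE ->].
    by case: (J k).
  by case: (J j).
by rewrite addbAC.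
Qed.

Definition edge_in_every_direction (S : pred {set 'I_m}) :=
  forall k, exists x, S x && S (toggle x k).

Lemma affine_form_eq_on (S : pred {set 'I_m}) J1 J2 c1 c2 x0 :
  S x0 -> edge_in_every_direction S ->
  (forall x, S x -> affine_form J1 c1 x = affine_form J2 c2 x) ->
  affine_form J1 c1 =1 affine_form J2 c2.
Proof.
move=> Sx0 edges E.
have EJ : J1 =1 J2.
  move=> k; have [x /andP[Sx Sxk]] := edges k.
  by move: (E _ Sxk); rewrite !affine_form_toggle E // => /addbI.
have Ec : c1 = c2 by move: (E _ Sx0); rewrite /affine_form (eq_bigl _ _ EJ) => /addbI.
by move=> x; rewrite /affine_form (eq_bigl _ _ EJ) Ec.
Qed.

Variables (R : 'I_m -> 'I_m -> bool) (e : 'I_m -> bool).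

Definition tri_form i := affine_form (fun j => (j < i)%N && R i j) (e i).

Definition tri_var i x := (i \in x) (+) tri_form i x.

Lemma tri_var_toggle i x k :
  tri_var i (toggle x k) = tri_var i x (+) ((i == k) (+) ((k < i)%N && R i k)).
Proof. by rewrite /tri_var /tri_form affine_form_toggle inE addbACA. Qed.

Lemma tri_var_inj x y : (forall i, tri_var i x = tri_var i y) -> x = y.
Proof.
move=> E; apply/setP => i.
elim/ltn_ind: {i}(val i) {-2}i (erefl (val i)) => n IH i ni.
have Etri : tri_form i x = tri_form i y.
  rewrite /tri_form /affine_form; congr (_ (+) _).
  by apply: eq_bigr => j /andP[ji _]; apply: (IH j) => //; rewrite -ni.
by move: (E i); rewrite /tri_var Etri => /addIb.
Qed.

Lemma tri_var_onto (t : 'I_m -> bool) : exists x, forall i, tri_var i x = t i.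
Proof.
pose F x := [ffun i => tri_var i x].
have injF : injective F.
  by move=> x y /ffunP E; apply: tri_var_inj => i; have := E i; rewrite !ffunE.
have /codomP[x Ex] : [ffun i => t i] \in codom F.
  apply: (inj_card_onto injF).
  have card_sets : #|{set 'I_m}| = 2 ^ m.
    by rewrite -cardsT -powersetT card_powerset cardsT card_ord.
  by rewrite card_ffun card_bool card_ord card_sets.
by exists x => i; move/ffunP: Ex => /(_ i); rewrite !ffunE.
Qed.

Lemma tri_quadric_edges (a b c d : 'I_m) : uniq [:: a; b; c; d] ->
  edge_in_every_direction
    (fun x => (tri_var a x && tri_var b x) (+) (tri_var c x && tri_var d x)).
Proof.
rewrite -rev_uniq /= !inE !negb_or => /and4P[/and3P[dc db da] /andP[cb ca] ba _] k.
pose delta i := (i == k) (+) ((k < i)%N && R i k).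
have [ta [tb [tc [td T]]]] := xor_and_edge (delta a) (delta b) (delta c) (delta d).
pose t i := if i == a then ta else if i == b then tb else if i == c then tc else td.
have [x Hx] := tri_var_onto t.
exists x; rewrite !tri_var_toggle !Hx /t !eqxx.
by rewrite (negbTE ba) (negbTE ca) (negbTE cb) (negbTE da) (negbTE db) (negbTE dc).
Qed.

End AffineForms.

Lemma tri_var_ext m (R R' : 'I_m -> 'I_m -> bool) e e' i :
  R i =1 R' i -> e i = e' i -> tri_var R e i =1 tri_var R' e' i.
Proof.
move=> ER Ee x; rewrite /tri_var /tri_form /affine_form Ee.
by under eq_bigl do rewrite ER.
Qed.

Section LinearTriangularAction.
Variable m : nat.
Implicit Types (a b c : lta m) (g h u x y : {set 'I_m}).

Lemma ev_act a u x :
  ev (act a u) x = \big[andb/true]_(i in u) tri_var a.1 a.2 i x.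
Proof.
have evM : {morph (fun p => ev p x) : p q / rmul p q >-> p && q}.
  by move=> ? ?; apply: ev_rmul.
have evD : {morph (fun p => ev p x) : p q / radd p q >-> p (+) q}.
  by move=> ? ?; apply: ev_radd.
rewrite /act (big_morph _ evM (ev_rone x)); apply: eq_bigr => i _.
rewrite /act_var !ev_radd ev_rvar (big_morph _ evD (ev_rzero x)).
under eq_bigr do rewrite ev_rvar.
rewrite /tri_var /tri_form /affine_form addbA.
by case: (a.2 i); rewrite ?ev_rone ?ev_rzero.
Qed.

Lemma LTA_g_entry_notin g a (i j : 'I_m) :
  a \in LTA_g g -> (j < i)%N -> a.1 i j -> j \notin g.
Proof.
rewrite inE => /andP[_ /andP[_ /forallP/(_ i)/forallP/(_ j)/implyP]] Hij ji aij.
by apply: contraTN aij => jg; rewrite (eqP (Hij _)) // ji jg orbT.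
Qed.

Definition ignores h (Q : pred {set 'I_m}) :=
  forall x y, x :\: h = y :\: h -> Q x = Q y.

Lemma mem_setD_eq h x y (j : 'I_m) :
  x :\: h = y :\: h -> j \notin h -> (j \in x) = (j \in y).
Proof. by move/setP/(_ j); rewrite !inE => + /negbTE jh; rewrite jh. Qed.

Lemma tri_form_ignores g h a i :
  a \in LTA_g g -> h \subset g -> ignores h (tri_form a.1 a.2 i).
Proof.
move=> Ag hg x y xy; rewrite /tri_form /affine_form; congr (_ (+) _).
apply: eq_bigr => j /andP[ji aij]; apply: mem_setD_eq xy _.
by apply: contra (LTA_g_entry_notin Ag ji aij); apply/subsetP.
Qed.

Lemma ev_act_ignores g h a u :
  a \in LTA_g g -> h \subset g -> [disjoint u & h] -> ignores h (ev (act a u)).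
Proof.
move=> Ag hg uh x y xy; rewrite !ev_act; apply: eq_bigr => i iu.
rewrite /tri_var (mem_setD_eq xy (negbT (disjointFr uh iu))).
by rewrite (tri_form_ignores i Ag hg xy).
Qed.

Definition fiber_one h a x := (x :\: h) :|: [set i in h | ~~ tri_form a.1 a.2 i x].

Lemma fiber_oneD h a x : fiber_one h a x :\: h = x :\: h.
Proof. by apply/setP => j; rewrite !inE; case: (j \in h); rewrite ?andbF ?orbF. Qed.

Lemma ev_act_fiber_one h a x : a \in LTA_g h -> ev (act a h) (fiber_one h a x).
Proof.
move=> Ah; rewrite ev_act big1 // => i ih.
rewrite /tri_var (tri_form_ignores i Ah (subxx h) (fiber_oneD h a x)) !inE ih /=.
by case: (tri_form _ _ i x).
Qed.

Lemma mul_act_eq_supp h a1 a2 (Q1 Q2 : pred {set 'I_m}) :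
  a1 \in LTA_g h -> a2 \in LTA_g h -> ignores h Q1 -> ignores h Q2 ->
  (forall x, ev (act a1 h) x && Q1 x = ev (act a2 h) x && Q2 x) ->
  forall x, Q1 x ->
  Q2 x /\ {in h, forall i, tri_form a1.1 a1.2 i x = tri_form a2.1 a2.2 i x}.
Proof.
move=> A1 A2 iQ1 iQ2 E x Q1x; set y := fiber_one h a1 x.
have yx : y :\: h = x :\: h := fiber_oneD h a1 x.
have := E y; rewrite ev_act_fiber_one // (iQ1 _ _ yx) Q1x => /esym/andP[P2y Q2y].
split=> [|i ih]; first by rewrite -(iQ2 _ _ yx).
move: P2y; rewrite ev_act (bigD1 i) //= => /andP[+ _].
rewrite /tri_var (tri_form_ignores i A2 (subxx h) yx) !inE ih /=.
by case: (tri_form a1.1 a1.2 i x); case: (tri_form a2.1 a2.2 i x).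
Qed.

Lemma mul_act_cancel h a1 a2 (q1 q2 : Rm m) :
  a1 \in LTA_g h -> a2 \in LTA_g h ->
  ignores h (ev q1) -> ignores h (ev q2) -> edge_in_every_direction (ev q1) ->
  rmul (act a1 h) q1 = rmul (act a2 h) q2 -> act a1 h = act a2 h /\ q1 = q2.
Proof.
move=> A1 A2 iq1 iq2 edges Heq.
have E x : ev (act a1 h) x && ev q1 x = ev (act a2 h) x && ev q2 x.
  by rewrite -!ev_rmul Heq.
have S12 := mul_act_eq_supp A1 A2 iq1 iq2 E.
have S21 := mul_act_eq_supp A2 A1 iq2 iq1 (fun x => esym (E x)).
split; last by apply: ev_inj => x; apply/idP/idP => [/S12[] | /S21[]].
apply: ev_inj => x; rewrite !ev_act; apply: eq_bigr => i ih.
have [x0 /andP[q1x0 _]] := edges i.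
have agree y : ev q1 y -> tri_form a1.1 a1.2 i y = tri_form a2.1 a2.2 i y.
  by move=> /S12[_]; apply.
by rewrite /tri_var /tri_form (affine_form_eq_on q1x0 edges agree).
Qed.

Lemma ev_act_sum_ignores g1 g2 h b c :
  b \in LTA_g g1 -> c \in LTA_g g2 -> h \subset g1 -> h \subset g2 ->
  ignores h (ev (radd (act b (g1 :\: h)) (act c (g2 :\: h)))).
Proof.
have dis g : [disjoint g :\: h & h] by apply/setDidPl; rewrite setDDl setUid.
move=> B C hg1 hg2 x y xy.
rewrite !ev_radd (ev_act_ignores B hg1 (dis g1) xy).
by rewrite (ev_act_ignores C hg2 (dis g2) xy).
Qed.

Lemma ev_act_pair a (i j : 'I_m) x : i != j ->
  ev (act a [set i; j]) x = tri_var a.1 a.2 i x && tri_var a.1 a.2 j x.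
Proof. by move=> ij; rewrite ev_act big_setU1 ?inE // big_set1. Qed.

Lemma act_pair_sum_edges b c (i j k l : 'I_m) : uniq [:: i; j; k; l] ->
  edge_in_every_direction (ev (radd (act b [set i; j]) (act c [set k; l]))).
Proof.
move=> uq; pose R r := if r \in [set i; j] then b.1 r else c.1 r.
pose e r := if r \in [set i; j] then b.2 r else c.2 r.
have tri_b r : r \in [set i; j] -> tri_var b.1 b.2 r =1 tri_var R e r.
  by move=> rij; apply: tri_var_ext => [s|]; rewrite /R /e rij.
have tri_c r : r \notin [set i; j] -> tri_var c.1 c.2 r =1 tri_var R e r.
  by move=> rij; apply: tri_var_ext => [s|]; rewrite /R /e (negbTE rij).
move: (uq); rewrite /= !inE !negb_or => /and4P[/and3P[ij ik il] /andP[jk jl] kl _].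
have [iij jij] : i \in [set i; j] /\ j \in [set i; j] by rewrite !inE !eqxx orbT.
have [kij lij] : k \notin [set i; j] /\ l \notin [set i; j].
  by rewrite !inE !negb_or ![_ == i]eq_sym ![_ == j]eq_sym ik il jk jl.
have Q x : ev (radd (act b [set i; j]) (act c [set k; l])) x =
    (tri_var R e i x && tri_var R e j x) (+) (tri_var R e k x && tri_var R e l x).
  by rewrite ev_radd !ev_act_pair // (tri_b i) // (tri_b j) // (tri_c k) // (tri_c l).
by move=> t; have [x Hx] := tri_quadric_edges R e uq t; exists x; rewrite !Q.
Qed.

End LinearTriangularAction.

Lemma card_mulS_inj m (S T : {set Rm m}) :
  (forall s1 s2 t1 t2, s1 \in S -> s2 \in S -> t1 \in T -> t2 \in T ->
     rmul s1 t1 = rmul s2 t2 -> s1 = s2 /\ t1 = t2) ->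
  #|mulS S T| = (#|S| * #|T|)%N.
Proof.
move=> inj; rewrite /mulS curry_imset2X card_in_imset ?cardsX // => -[s1 t1] [s2 t2].
by rewrite !inE /= => /andP[S1 T1] /andP[S2 T2] /(inj _ _ _ _ S1 S2 T1 T2)[-> ->].
Qed.

Theorem lemma3 (m : nat) (I : {set mono m}) (f g : mono m) :
  (1 <= m)%N ->
  decreasing I ->
  f \in I -> g \in I ->
  mdeg f = (\max_(u in I) mdeg u)%N ->
  mdeg g = (\max_(u in I) mdeg u)%N ->
  (mdeg (mgcd f g) + 2 = \max_(u in I) mdeg u)%N ->
  let h := mgcd f g in
  #|mulS (actS (LTA_g h) h)
         (addS (actS (LTA_g f) (mdiv f h)) (actS (LTA_g g) (mdiv g h)))| =
  (#|actS (LTA_g h) h| *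
   #|addS (actS (LTA_g f) (mdiv f h)) (actS (LTA_g g) (mdiv g h))|)%N.
Proof.
move=> _ _ _ _ df dg dh h; rewrite /mdeg in df dg dh.
have hf : h \subset f := subsetIl f g.
have hg : h \subset g := subsetIr f g.
have /cards2P[a [b [ab fh]]] : #|f :\: h| == 2.
  by rewrite cardsD setIA setIid df -dh addKn.
have /cards2P[c [d [cd gh]]] : #|g :\: h| == 2.
  by rewrite cardsD setICA setIid dg -dh addKn.
have uq : uniq [:: a; b; c; d].
  have fh_f k : k \in f :\: h -> k \in f by rewrite inE => /andP[].
  have gh_nf k : k \in g :\: h -> k \notin f.
    by rewrite /h !inE; case: (k \in f); case: (k \in g).
  have neq x y : x \in f :\: h -> y \in g :\: h -> x != y.
    by move=> /fh_f xf /gh_nf; apply: contraNneq => <-.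
  by rewrite /= !inE !negb_or ab cd !neq // ?fh ?gh !inE eqxx ?orbT.
rewrite /mdiv card_mulS_inj // => s1 s2 t1 t2 /imsetP[a1 A1 ->] /imsetP[a2 A2 ->].
move=> /imset2P[q1 r1 /imsetP[b1 B1 ->] /imsetP[c1 C1 ->] ->].
move=> /imset2P[q2 r2 /imsetP[b2 B2 ->] /imsetP[c2 C2 ->] ->] Heq.
have edges : edge_in_every_direction (ev (radd (act b1 (f :\: h)) (act c1 (g :\: h)))).
  by rewrite fh gh; apply: act_pair_sum_edges.
by have [-> ->] := mul_act_cancel A1 A2 (ev_act_sum_ignores B1 C1 hf hg)
  (ev_act_sum_ignores B2 C2 hf hg) edges Heq.
Qed.
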